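(* Fix $\bm E$ and a family $(\sigma_{j,i})$ satisfying the degree constraints below, over a field $\mathbb K$, and let $h_0,\dots,h_s$ be the associated Conca–Valla polynomials and $(g_0,\dots,g_s)$ the reduced lexicographic ($y\succ x$) Gröbner basis of the ideal they generate. For $i=0,\dots,s$ put $M_i=\prod_{k=1}^{i}(x^{d_k}-\sigma_{k-1,k-1})\in\mathbb K[x]$ (with $M_0=1$). Then: (1) $\deg_x h_s=m_s$ and $\deg_x h_i<m_s$ for $i=0,\dots,s-1$; (2) for each $i$, $M_i$ divides $h_i,h_{i+1},\dots,h_s$; (3) $M_i$ is the polynomial coefficient of $y^{n_i}$ (i.e. the coefficient in $\mathbb K[x]$ of $y^{n_i}$ when viewed in $\mathbb K[x][y]$) both in $h_i$ and in $g_i$. Consequently, in Lazard's factorization $g_i=D_1\cdots D_i\,G_i$ of the reduced basis, one has $D_i=x^{d_i}-\sigma_{i-1,i-1}$ for $i=1,\dots,s$.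
   Context: All polynomial rings are ordered by the lexicographic order with $y\succ x$. Fix $s\ge1$, integers $0=m_0<m_1<\cdots<m_s$ and $n_0>n_1>\cdots>n_s=0$, and $\bm E=(y^{n_0},x^{m_1}y^{n_1},\dots,x^{m_{s-1}}y^{n_{s-1}},x^{m_s})$; set $d_i=m_i-m_{i-1}$, $e_i=n_{i-1}-n_i$ ($1\le i\le s$), $\delta=\sum_{i=1}^sd_in_{i-1}$. Conca–Valla parametrization: a family $(\sigma_{j,i})_{0\le i\le s-1,\ i\le j\le s}$ in $\mathbb K[x,y]$ satisfies the degree constraints if $\deg_x\sigma_{j,i}<d_{i+1}$ for all $i,j$, $\sigma_{i,i}\in\mathbb K[x]$, and $\deg_y\sigma_{j,i}<e_j$ for $j>i$. The associated polynomials are $h_s=\prod_{k=1}^s(x^{d_k}-\sigma_{k-1,k-1})$ and, for $i=s-1,\dots,0$, $h_i$ defined by $(x^{d_{i+1}}-\sigma_{i,i})h_i=y^{e_{i+1}}h_{i+1}+\sum_{j=i+1}^s\sigma_{j,i}h_j$ (an exact division). It is known (Conca–Valla) that $h_0,\dots,h_s$ is then a minimal Gröbner basis with initial terms $x^{m_i}y^{n_i}$ of an ideal whose initial ideal is $\langle\bm E\rangle$, and that this gives a bijection between such families and the set of ideals of $\mathbb K[x,y]$ with initial ideal $\langle\bm E\rangle$. Lazard's theorem: the reduced Gröbner basis $(g_0,\dots,g_s)$ of a zero-dimensional ideal with initial terms $\bm E$ factors as $g_i=D_1\cdots D_iG_i$ with $D_k\in\mathbb K[x]$ monic of degree $d_k$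 and $G_i$ monic of degree $n_i$ in $y$. *)

(* Bivariate polynomials K[x,y] are represented as
   {poly {poly K}} = K[x][y]: the outer variable 'X is y, the inner one
   ('X)%:P is x.  The coefficient of x^a y^b in p is (p`_b)`_a. *)
From HB Require Import structures.
From mathcomp Require Import all_boot all_order all_algebra.
Set Implicit Arguments. Unset Strict Implicit. Unset Printing Implicit Defensive.
Import Order.TTheory GRing.Theory Num.Theory.
Local Open Scope ring_scope.

Section Bivariate.
Variable K : fieldType.
Notation bpoly := {poly {poly K}}.

Definition coefxy (p : bpoly) (a b : nat) : K := (p`_b)`_a.

(* degree in x (the degree of the zero polynomial is taken to be 0) *)
Definition degx (p : bpoly) : nat := (\max_(i < size p) size (nth 0%R p i))%N.-1.

(* lexicographic order with y > x on monomials x^a y^b encoded as (a, b) *)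
Definition mlex (u v : nat * nat) : bool :=
  (u.2 < v.2)%N || ((u.2 == v.2) && (u.1 < v.1)%N).

Definition lmon (p : bpoly) : nat * nat := ((size (lead_coef p)).-1, (size p).-1).

Definition lcoef (p : bpoly) : K := lead_coef (lead_coef p).

Definition mdvd (u v : nat * nat) : bool := (u.1 <= v.1)%N && (u.2 <= v.2)%N.

Definition in_ideal (s : nat) (h : nat -> bpoly) (f : bpoly) : Prop :=
  exists c : nat -> bpoly, f = \sum_(i < s.+1) c i * h i.

Definition is_reduced_GB (s : nat) (h g : nat -> bpoly) : Prop :=
  [/\ forall i, (i <= s)%N -> in_ideal s h (g i),
      forall i, (i <= s)%N -> g i != 0 /\ lcoef (g i) = 1,
      forall f, in_ideal s h f -> f != 0 ->
        exists2 i, (i <= s)%N & mdvd (lmon (g i)) (lmon f)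
    & forall i j a b, (i <= s)%N -> (j <= s)%N -> i != j ->
        coefxy (g i) a b != 0 -> ~~ mdvd (lmon (g j)) (a, b)].

(* the staircase E = (y^{n_0}, x^{m_1}y^{n_1}, ..., x^{m_s}) *)
Definition staircase (s : nat) (m n : nat -> nat) : Prop :=
  [/\ m 0%N = 0%N, n s = 0%N,
      forall i, (i < s)%N -> (m i < m i.+1)%N
    & forall i, (i < s)%N -> (n i.+1 < n i)%N].

Definition dd (m : nat -> nat) (i : nat) : nat := (m i - m i.-1)%N.
Definition ee (n : nat -> nat) (i : nat) : nat := (n i.-1 - n i)%N.

Definition degree_constraints (s : nat) (m n : nat -> nat)
    (sigma : nat -> nat -> bpoly) : Prop :=
  forall i j, (i < s)%N -> (i <= j <= s)%N ->
    [/\ (degx (sigma j i) < dd m i.+1)%N \/ sigma j i = 0,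
        (i == j) ==> (size (sigma j i) <= 1)%N
      & (i < j)%N ==> (size (sigma j i) <= ee n j)%N].

Definition sig0 (sigma : nat -> nat -> bpoly) (i : nat) : {poly K} := (sigma i i)`_0.

Definition Mpoly (m : nat -> nat) (sigma : nat -> nat -> bpoly) (i : nat) : {poly K} :=
  \prod_(k < i) ('X^(dd m k.+1) - sig0 sigma k).

Definition CV_polys (s : nat) (m n : nat -> nat) (sigma : nat -> nat -> bpoly)
    (h : nat -> bpoly) : Prop :=
  h s = (Mpoly m sigma s)%:P /\
  forall i, (i < s)%N ->
    (('X^(dd m i.+1))%:P - sigma i i) * h i
      = 'X^(ee n i.+1) * h i.+1 + \sum_(i.+1 <= j < s.+1) sigma j i * h j.

Definition lazard_factorization (s : nat) (m n : nat -> nat) (g : nat -> bpoly)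
    (D : nat -> {poly K}) (G : nat -> bpoly) : Prop :=
  [/\ forall k, (1 <= k <= s)%N -> D k \is monic /\ size (D k) = (dd m k).+1,
      forall i, (i <= s)%N -> lead_coef (G i) = 1 /\ size (G i) = (n i).+1
    & forall i, (i <= s)%N -> g i = (\prod_(1 <= k < i.+1) D k)%:P * G i].

End Bivariate.

(* Descending induction on i, from h_s = M_s, along the recursion
     c_i h_i = y^(e_(i+1)) h_(i+1) + sum_(j > i) sigma_(j,i) h_j,   c_i = x^(d_(i+1)) - sigma_(i,i):
   the bound deg_y h_i <= n_i, the coefficient M_i of y^(n_i), the factor M_i and the bound
   deg_x h_i < m_s all pass from the right-hand side to h_i after cancelling c_i.
   For the reduced basis, g_i - h_i lies in the ideal; were it nonzero, its leading monomial
   would be x^a y^(n_i) with a < m_i, since the y^(n_i)-coefficients of g_i and h_i are both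
   monic of degree m_i, and no x^(m_j) y^(n_j) divides such a monomial.
   Lazard's D_i are then quotients of consecutive M_i. *)
From HB Require Import structures.
From mathcomp Require Import all_boot all_order all_algebra.
From mathcomp Require Import zify ring.
Import GRing.Theory.
Local Open Scope ring_scope.

Set Implicit Arguments. Unset Strict Implicit. Unset Printing Implicit Defensive.

Lemma downward_ind (s : nat) (P : nat -> Prop) :
  P s -> (forall i, (i < s)%N -> (forall j, (i < j <= s)%N -> P j) -> P i) ->
  forall i, (i <= s)%N -> P i.
Proof.
move=> Ps Pstep.
suff Pk k : forall j, (s - k <= j <= s)%N -> P j by move=> i i_le_s; apply: (Pk s); lia.
elim: k => [|k IHk] j j_range; first by have -> : j = s by lia.
have [jk|jk] := leqP (s - k) j; first by apply: IHk; lia.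
by apply: Pstep => [|j' j'_range]; [lia | apply: IHk; lia].
Qed.

Section StaircaseOrder.
Variables (s : nat) (m n : nat -> nat).
Hypothesis st : staircase s m n.

Lemma staircase_lt i j : (i < j)%N -> (j <= s)%N -> (m i < m j)%N /\ (n j < n i)%N.
Proof.
case: st => _ _ m_inc n_dec ij js.
have D_conv : {in [pred x | (x <= s)%N] &,
    forall a b c, (a < c < b)%N -> c \in [pred x | (x <= s)%N]}.
  by move=> a b _ /= bs c /andP[_ /ltnW cb]; exact: leq_trans cb bs.
have iD : i \in [pred x | (x <= s)%N] by rewrite inE /=; lia.
have jD : j \in [pred x | (x <= s)%N] by [].
split.
- by apply: (homo_ltn_in ltn_trans D_conv _ iD jD ij) => k _ ks; apply: m_inc.
- have gt_trans y x z : (y < x -> z < y -> z < x)%N by move=> yx zy; exact: ltn_trans zy yx.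
  by apply: (homo_ltn_in gt_trans D_conv _ iD jD ij) => k _ ks; apply: n_dec.
Qed.

Lemma staircase_m_gt0 : (1 <= s)%N -> (0 < m s)%N.
Proof. by move=> s_gt0; case: (st) => m0 _ _ _; rewrite -m0; case: (staircase_lt s_gt0). Qed.

Lemma dd_gt0 i : (i < s)%N -> (0 < dd m i.+1)%N.
Proof. by move=> i_lt_s; case: (staircase_lt (ltnSn i) i_lt_s); rewrite /dd /=; lia. Qed.

Lemma staircase_n_le i j : (i <= j)%N -> (j <= s)%N -> (n j <= n i)%N.
Proof.
by rewrite leq_eqVlt => /orP[/eqP -> //|ij] js; exact: ltnW (staircase_lt ij js).2.
Qed.

(* Under the staircase, x^(m_j) y^(n_j) | x^a y^(n_i) forces n_j <= n_i, hence i <= j. *)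
Lemma staircase_mdvd i j a : (i <= s)%N -> (j <= s)%N ->
  mdvd (m j, n j) (a, n i) -> (m i <= a)%N.
Proof.
move=> i_le_s js /andP[/= ma nji]; apply: leq_trans ma.
have [ij|ji|->] := ltngtP i j; last by [].
- by case: (staircase_lt ij js) => /ltnW.
- by case: (staircase_lt ji i_le_s); lia.
Qed.

End StaircaseOrder.

Section XDegree.
Variable K : fieldType.
Notation bpoly := {poly {poly K}}.

Definition xsize_le (p : bpoly) (k : nat) := forall t, (size (p`_t)%R <= k)%N.

Lemma degx_lt_xsize (p : bpoly) k : (0 < k)%N -> (degx p < k)%N <-> xsize_le p k.
Proof.
rewrite /degx => k_gt0; split => [pk t | pk].
- have [tp|tp] := ltnP t (size p); last by rewrite nth_default ?size_poly0.
  have := @leq_bigmax _ (fun i : 'I_(size p) => size (p`_i)%R) (Ordinal tp).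
  by move: pk => /=; lia.
- have : (\max_(i < size p) size (p`_i)%R <= k)%N by apply/bigmax_leqP => i _; exact: pk.
  lia.
Qed.

Lemma degxC (c : {poly K}) : degx c%:P = (size c).-1.
Proof.
rewrite /degx size_polyC; have [->|_] := eqVneq c 0; first by rewrite big_ord0 size_poly0.
by rewrite big_ord_recr big_ord0 /= coefC /= max0n.
Qed.

Lemma xsize_leW (p : bpoly) k l : (k <= l)%N -> xsize_le p k -> xsize_le p l.
Proof. by move=> kl pk t; exact: leq_trans (pk t) kl. Qed.

Lemma xsize_leD (p q : bpoly) k : xsize_le p k -> xsize_le q k -> xsize_le (p + q) k.
Proof.
by move=> pk qk t; rewrite coefD; apply: leq_trans (size_polyD _ _) _; rewrite geq_max pk qk.
Qed.

Lemma xsize_le_sum (I : Type) (r : seq I) (P : pred I) (F : I -> bpoly) k :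
  (forall j, P j -> xsize_le (F j) k) -> xsize_le (\sum_(j <- r | P j) F j) k.
Proof.
move=> Fk; apply: (big_ind (xsize_le^~ k)) => //; first by move=> t; rewrite coef0 size_poly0.
by move=> p q; exact: xsize_leD.
Qed.

Lemma xsize_leM (p q : bpoly) a b :
  xsize_le p a -> xsize_le q b -> xsize_le (p * q) (a + b).-1.
Proof.
move=> pa qb t; rewrite coefM.
apply: (big_ind (fun c : {poly K} => size c <= (a + b).-1)%N).
- by rewrite size_poly0.
- by move=> c c' cs c's; apply: leq_trans (size_polyD _ _) _; rewrite geq_max cs c's.
- move=> j _; apply: leq_trans (size_polyMleq _ _) _.
  by have := pa j; have := qb (t - j)%N; lia.
Qed.

Lemma xsize_leXnM (p : bpoly) e k : xsize_le p k -> xsize_le ('X^e * p) k.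
Proof. by move=> pk t; rewrite coefXnM; case: ifP; rewrite ?size_poly0. Qed.

Lemma xsize_le_polyCMK (c : {poly K}) (p : bpoly) k :
  c != 0 -> xsize_le (c%:P * p) ((size c).-1 + k) -> xsize_le p k.
Proof.
move=> c_neq0 cpk t; have := cpk t; rewrite coefCM.
have [->|pt_neq0] := eqVneq p`_t 0; first by rewrite size_poly0.
have c_gt0 : (0 < size c)%N by rewrite size_poly_gt0.
rewrite size_mul //; move: (size c) (size (p`_t)%R) c_gt0 => a b; lia.
Qed.

Definition cdvdp (d : {poly K}) (p : bpoly) := exists q, p = q * d%:P.

Lemma cdvdpD d (p q : bpoly) : cdvdp d p -> cdvdp d q -> cdvdp d (p + q).
Proof. by move=> [p' ->] [q' ->]; exists (p' + q'); rewrite mulrDl. Qed.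

Lemma cdvdp_mull d (r p : bpoly) : cdvdp d p -> cdvdp d (r * p).
Proof. by move=> [p' ->]; exists (r * p'); rewrite mulrA. Qed.

Lemma cdvdp_sum (I : Type) (r : seq I) (P : pred I) (F : I -> bpoly) d :
  (forall j, P j -> cdvdp d (F j)) -> cdvdp d (\sum_(j <- r | P j) F j).
Proof.
move=> Fd; apply: (big_ind (cdvdp d)) => //; first by exists 0; rewrite mul0r.
exact: cdvdpD.
Qed.

Lemma cdvdp_mulr d e (p : bpoly) : cdvdp (d * e) p -> cdvdp d p.
Proof. by move=> [q ->]; exists (q * e%:P); rewrite polyCM; ring. Qed.

Lemma cdvdp_polyCMK d (c : {poly K}) (p : bpoly) :
  c != 0 -> cdvdp (d * c) (c%:P * p) -> cdvdp d p.
Proof.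
move=> c_neq0 [q qE]; exists q; apply: (@mulfI _ c%:P); first by rewrite polyC_eq0.
by rewrite qE polyCM; ring.
Qed.

Lemma size_monicB (p q : {poly K}) :
  p \is monic -> q \is monic -> size p = size q -> (size (p - q)%R <= (size p).-1)%N.
Proof.
move=> /monicP p1 /monicP q1 pq; apply/leq_sizeP => t.
rewrite leq_eqVlt coefB => /orP[/eqP <-|tp].
  by rewrite -lead_coefE pq -lead_coefE p1 q1 subrr.
have p_gt0 : (0 < size p)%N by rewrite size_poly_gt0 -lead_coef_eq0 p1 oner_eq0.
have tp' : (size p <= t)%N by move: (size p) p_gt0 tp => a; lia.
by rewrite !nth_default ?subrr -?pq.
Qed.

Lemma lmon_lcoef1 (p : bpoly) a b : lcoef p = 1 -> lmon p = (a, b) ->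
  [/\ size p = b.+1, p`_b \is monic & size (p`_b)%R = a.+1].
Proof.
rewrite /lcoef /lmon => lc1 [lca sp].
have lc_neq0 : lead_coef p != 0.
  by apply: contra_eq_neq lc1 => ->; rewrite lead_coef0 eq_sym oner_eq0.
have p_neq0 : p != 0 by apply: contra_neq lc_neq0 => ->; rewrite lead_coef0.
have size_p : size p = b.+1 by rewrite -sp prednK // size_poly_gt0.
have -> : p`_b = lead_coef p by rewrite lead_coefE size_p.
by split => //; [exact/monicP | rewrite -lca prednK // size_poly_gt0].
Qed.

End XDegree.

Section ConcaVallaRecursion.
Variables (K : fieldType) (s : nat) (m n : nat -> nat).
Variables (sigma : nat -> nat -> {poly {poly K}}) (h : nat -> {poly {poly K}}).
Hypotheses (st : staircase s m n) (dc : degree_constraints s m n sigma).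

Definition cv_factor i : {poly K} := 'X^(dd m i.+1) - sig0 sigma i.

Lemma MpolyS i : Mpoly m sigma i.+1 = Mpoly m sigma i * cv_factor i.
Proof. by rewrite /Mpoly big_ord_recr. Qed.

Lemma Mpoly_split i j : (i <= j)%N ->
  Mpoly m sigma j = Mpoly m sigma i * \prod_(i <= k < j) cv_factor k.
Proof.
move=> ij; rewrite /Mpoly -!(big_mkord (fun _ => true) cv_factor).
exact: big_cat_nat.
Qed.

Lemma size_sig0 i : (i < s)%N -> (size (sig0 sigma i) <= dd m i.+1)%N.
Proof.
move=> i_lt_s; have ii_range : (i <= i <= s)%N by rewrite leqnn ltnW.
rewrite /sig0; have [[deg_ii|->] _ _] := dc i_lt_s ii_range; last first.
  by rewrite coef0 size_poly0.
exact: (degx_lt_xsize _ (dd_gt0 st i_lt_s)).1 deg_ii 0%N.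
Qed.

Lemma sigma_diagC i : (i < s)%N -> sigma i i = (sig0 sigma i)%:P.
Proof.
move=> i_lt_s; have ii_range : (i <= i <= s)%N by rewrite leqnn ltnW.
have [_ size_ii _] := dc i_lt_s ii_range.
by rewrite /sig0 -size1_polyC //; rewrite eqxx in size_ii.
Qed.

Lemma cv_factor_monic i : (i < s)%N -> cv_factor i \is monic.
Proof.
move=> i_lt_s; apply/monicP; rewrite lead_coefDl ?lead_coefXn //.
by rewrite size_polyN size_polyXn ltnS size_sig0.
Qed.

Lemma size_cv_factor i : (i < s)%N -> size (cv_factor i) = (dd m i.+1).+1.
Proof.
by move=> i_lt_s; rewrite size_polyDl size_polyXn // size_polyN ltnS size_sig0.
Qed.

Lemma Mpoly_monic_size i : (i <= s)%N ->
  Mpoly m sigma i \is monic /\ size (Mpoly m sigma i) = (m i).+1.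
Proof.
elim: i => [|i IHi] i_le_s.
  by rewrite /Mpoly big_ord0 monic1 size_poly1; case: st => ->.
have [M_mon M_size] := IHi (ltnW i_le_s).
have c_mon := cv_factor_monic i_le_s.
rewrite MpolyS monicMl // size_Mmonic ?monic_neq0 // M_size size_cv_factor //.
by split => //; have [+ _] := staircase_lt st (ltnSn i) i_le_s; rewrite /dd /=; lia.
Qed.

Hypothesis cv : CV_polys s m n sigma h.

Definition cv_tail i := \sum_(i.+1 <= j < s.+1) sigma j i * h j.

Lemma cv_rec i : (i < s)%N ->
  (cv_factor i)%:P * h i = 'X^(ee n i.+1) * h i.+1 + cv_tail i.
Proof. by move=> i_lt_s; rewrite polyCB -(sigma_diagC i_lt_s); case: cv => _ ->. Qed.

Definition cv_inv j := [/\ (size (h j) <= (n j).+1)%N, (h j)`_(n j) = Mpoly m sigma j,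
  cdvdp (Mpoly m sigma j) (h j) & xsize_le (h j) (m s).+1].

Lemma cv_inv_s : cv_inv s.
Proof.
have [_ M_size] := Mpoly_monic_size (leqnn s).
rewrite /cv_inv; case: cv => -> _; split.
- exact: leq_trans (size_polyC_leq1 _) _.
- by case: st => _ ->; rewrite coefC.
- by exists 1; rewrite mul1r.
- by move=> t; rewrite coefC; case: eqP; rewrite ?M_size ?size_poly0.
Qed.

Section Step.
Variable i : nat.
Hypotheses (i_lt_s : (i < s)%N) (IH : forall j, (i < j <= s)%N -> cv_inv j).

Lemma size_cv_tail : (size (cv_tail i) <= n i)%N.
Proof.
apply: leq_trans (size_sum _ _ _) _; apply/bigmax_leqP_seq => j.
rewrite mem_index_iota => j_range _.
have [size_hj _ _ _] : cv_inv j by apply: IH; lia.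
have [ij ij_range] : (i < j)%N /\ (i <= j <= s)%N by lia.
have [_ _ /implyP/(_ ij) size_sig] := dc i_lt_s ij_range.
have n_pred : (n j < n j.-1)%N by apply: (proj2 (staircase_lt st _ _)); lia.
have n_pred_le : (n j.-1 <= n i)%N by apply: (staircase_n_le st); lia.
apply: leq_trans (size_polyMleq _ _) _; move: size_sig size_hj; rewrite /ee.
by move: (size (sigma j i)) (size (h j)) => a b; lia.
Qed.

Lemma xsize_cv_tail : xsize_le (cv_tail i) (dd m i.+1 + m s).
Proof.
rewrite /cv_tail big_nat_cond; apply: xsize_le_sum => j /andP[j_range _].
have [_ _ _ xsize_hj] : cv_inv j by apply: IH; lia.
have ij_range : (i <= j <= s)%N by lia.
have [sig_deg _ _] := dc i_lt_s ij_range.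
have xsize_sig : xsize_le (sigma j i) (dd m i.+1).
  case: sig_deg => [/(degx_lt_xsize _ (dd_gt0 st i_lt_s)).1 // | ->].
  by move=> t; rewrite coef0 size_poly0.
by apply: xsize_leW (xsize_leM xsize_sig xsize_hj); rewrite addnS.
Qed.

Lemma cdvdp_cv_tail : cdvdp (Mpoly m sigma i.+1) (cv_tail i).
Proof.
rewrite /cv_tail big_nat_cond; apply: cdvdp_sum => j /andP[j_range _]; apply: cdvdp_mull.
have [_ _ dvd_hj _] : cv_inv j by apply: IH; lia.
have ij : (i.+1 <= j)%N by lia.
by move: dvd_hj; rewrite (Mpoly_split ij) => /cdvdp_mulr.
Qed.

Let cv_factor_neq0 : cv_factor i != 0 := monic_neq0 (cv_factor_monic i_lt_s).

Let inv_next : cv_inv i.+1.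
Proof. by apply: IH; rewrite ltnSn. Qed.

Lemma size_h_step : (size (h i) <= (n i).+1)%N.
Proof.
have [size_h1 _ _ _] := inv_next.
rewrite -(size_scale (h i) cv_factor_neq0) -mul_polyC cv_rec //.
apply: leq_trans (size_polyD _ _) _; rewrite geq_max (leq_trans size_cv_tail) // andbT.
apply: leq_trans (size_polyMleq _ _) _; rewrite size_polyXn /ee /=.
have := (staircase_lt st (ltnSn i) i_lt_s).2.
by move: size_h1; move: (size (h i.+1)) => a; lia.
Qed.

Lemma coef_h_step : (h i)`_(n i) = Mpoly m sigma i.
Proof.
have [_ coef_h1 _ _] := inv_next.
have n_lt := (staircase_lt st (ltnSn i) i_lt_s).2.
have := congr1 (fun p : {poly {poly K}} => p`_(n i)) (cv_rec i_lt_s).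
rewrite /= coefCM coefD coefXnM (nth_default _ size_cv_tail) addr0 /ee /=.
rewrite ltnNge leq_subr /= subKn ?(ltnW n_lt) // coef_h1 MpolyS mulrC.
by move/(mulIf cv_factor_neq0).
Qed.

Lemma cdvdp_h_step : cdvdp (Mpoly m sigma i) (h i).
Proof.
have [_ _ dvd_h1 _] := inv_next.
apply: (cdvdp_polyCMK cv_factor_neq0); rewrite cv_rec // -MpolyS.
exact: cdvdpD (cdvdp_mull _ dvd_h1) cdvdp_cv_tail.
Qed.

Lemma xsize_h_step : xsize_le (h i) (m s).
Proof.
have [_ _ _ xsize_h1] := inv_next.
apply: (xsize_le_polyCMK cv_factor_neq0); rewrite size_cv_factor // cv_rec //=.
apply: xsize_leD xsize_cv_tail; apply: xsize_leXnM; apply: xsize_leW xsize_h1.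
by rewrite addnC -addn1 leq_add2l (dd_gt0 st i_lt_s).
Qed.

Lemma cv_inv_step : cv_inv i.
Proof.
split; [exact: size_h_step | exact: coef_h_step | exact: cdvdp_h_step |].
exact: xsize_leW (leqnSn _) xsize_h_step.
Qed.

End Step.

Lemma cv_invariant i : (i <= s)%N -> cv_inv i.
Proof. by apply: downward_ind cv_inv_s _ i => j; exact: cv_inv_step. Qed.

Lemma xsize_h_lt i : (i < s)%N -> xsize_le (h i) (m s).
Proof. by move=> i_lt_s; apply: xsize_h_step => // j j_range; apply: cv_invariant; lia. Qed.

End ConcaVallaRecursion.

Section ReducedBasis.
Variables (K : fieldType) (s : nat) (m n : nat -> nat) (h g : nat -> {poly {poly K}}).

Lemma in_ideal_gen i : (i <= s)%N -> in_ideal s h (h i).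
Proof.
move=> i_le_s; exists (fun k => (k == i)%:R).
rewrite (bigD1 (Ordinal (i_le_s : i < s.+1)%N)) //= eqxx mul1r big1 ?addr0 // => k k_neq_i.
have /negbTE -> : (k : nat) != i by apply: contraNneq k_neq_i => ki; apply/eqP/val_inj.
by rewrite mul0r.
Qed.

Lemma in_idealB f1 f2 : in_ideal s h f1 -> in_ideal s h f2 -> in_ideal s h (f1 - f2).
Proof.
move=> [c1 ->] [c2 ->]; exists (fun k => c1 k - c2 k); rewrite -sumrB.
by apply: eq_bigr => k _; rewrite mulrBl.
Qed.

Hypotheses (st : staircase s m n) (gb : is_reduced_GB s h g)
  (lmon_g : forall i, (i <= s)%N -> lmon (g i) = (m i, n i)).

Lemma lmon_ideal_ge i f : (i <= s)%N -> in_ideal s h f -> f != 0 ->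
  (lmon f).2 = n i -> (m i <= (lmon f).1)%N.
Proof.
case: gb => _ _ lmon_dvd _ i_le_s f_in f_neq0 lf2.
have [j j_le_s] := lmon_dvd f f_in f_neq0.
rewrite lmon_g //; case: (lmon f) lf2 => a b /= -> dvd_f.
exact: (staircase_mdvd st i_le_s j_le_s dvd_f).
Qed.

Lemma reduced_GB_coef i p : (i <= s)%N -> in_ideal s h p -> (size p <= (n i).+1)%N ->
  p`_(n i) \is monic -> size p`_(n i) = (m i).+1 -> (g i)`_(n i) = p`_(n i).
Proof.
case: (gb) => g_in g_lc1 _ _ i_le_s p_in size_p p_mon p_size.
have [size_g g_mon g_size] := lmon_lcoef1 (g_lc1 i i_le_s).2 (lmon_g i_le_s).
apply/eqP; rewrite -subr_eq0; apply/negP => /negP c_neq0.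
set f := g i - p.
have fc : f`_(n i) = (g i)`_(n i) - p`_(n i) by rewrite coefB.
have size_f : size f = (n i).+1.
  apply/eqP; rewrite eqn_leq; apply/andP; split.
    by apply: leq_trans (size_polyD _ _) _; rewrite size_polyN geq_max size_g leqnn.
  by rewrite ltnNge; apply: contra c_neq0 => /leq_sizeP/(_ _ (leqnn _)); rewrite fc => ->.
have f_neq0 : f != 0 by rewrite -size_poly_gt0 size_f.
have := lmon_ideal_ge i_le_s (in_idealB (g_in i i_le_s) p_in) f_neq0.
rewrite /lmon size_f lead_coefE size_f /= fc => /(_ erefl).
have := size_monicB g_mon p_mon (etrans g_size (esym p_size)).
have := size_poly_gt0 ((g i)`_(n i) - p`_(n i)); rewrite c_neq0 g_size /=.
by move: (size _) => a; lia.
Qed.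

Lemma lazard_prodE D G i : lazard_factorization s m n g D G -> (i <= s)%N ->
  \prod_(1 <= k < i.+1) D k = (g i)`_(n i).
Proof.
case=> _ G_shape g_fact i_le_s; have [G_lc G_size] := G_shape i i_le_s.
have G_top : (G i)`_(n i) = 1 by rewrite -G_lc lead_coefE G_size.
by rewrite g_fact // coefCM G_top mulr1.
Qed.

End ReducedBasis.

Lemma lazard_factorE (K : fieldType) (s : nat) (m n : nat -> nat)
    (sigma : nat -> nat -> {poly {poly K}}) (g : nat -> {poly {poly K}})
    (D : nat -> {poly K}) (G : nat -> {poly {poly K}}) :
  staircase s m n -> degree_constraints s m n sigma ->
  lazard_factorization s m n g D G ->
  (forall i, (i <= s)%N -> (g i)`_(n i) = Mpoly m sigma i) ->
  forall i, (i < s)%N -> D i.+1 = cv_factor m sigma i.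
Proof.
move=> st dc fact coef_g i i_lt_s.
have M_neq0 := monic_neq0 (Mpoly_monic_size st dc (ltnW i_lt_s)).1.
have := lazard_prodE fact i_lt_s.
rewrite big_nat_recr //= (lazard_prodE fact (ltnW i_lt_s)) !coef_g ?MpolyS ?(ltnW i_lt_s) //.
by move/(mulfI M_neq0).
Qed.

Unset Implicit Arguments. Set Strict Implicit.

Theorem mainTheorem5 (K : fieldType) (s : nat) (m n : nat -> nat)
    (sigma : nat -> nat -> {poly {poly K}}) (h g : nat -> {poly {poly K}}) :
  (1 <= s)%N ->
  staircase s m n ->
  degree_constraints s m n sigma ->
  CV_polys s m n sigma h ->
  is_reduced_GB s h g ->
  (forall i, (i <= s)%N -> lmon (g i) = (m i, n i)) ->
  [/\ degx (h s) = m s /\ (forall i, (i < s)%N -> (degx (h i) < m s)%N),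
      (forall i j, (i <= j <= s)%N ->
         exists q : {poly {poly K}}, h j = q * (Mpoly m sigma i)%:P),
      (forall i, (i <= s)%N ->
         (h i)`_(n i) = Mpoly m sigma i /\ (g i)`_(n i) = Mpoly m sigma i)
    & (forall (D : nat -> {poly K}) (G : nat -> {poly {poly K}}),
         lazard_factorization s m n g D G ->
         forall i, (1 <= i <= s)%N -> D i = 'X^(dd m i) - sig0 sigma i.-1)].
Proof.
move=> s_gt0 st dc cv gb lmon_g.
have inv := cv_invariant st dc cv.
have coef_g i : (i <= s)%N -> (g i)`_(n i) = Mpoly m sigma i.
  move=> i_le_s; have [size_h coef_h _ _] := inv i i_le_s.
  have [M_mon M_size] := Mpoly_monic_size st dc i_le_s.
  by rewrite (reduced_GB_coef st gb lmon_g i_le_s (in_ideal_gen h i_le_s) size_h); rewrite coef_h.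
split.
- split; first by case: cv => -> _; rewrite degxC (Mpoly_monic_size st dc (leqnn s)).2.
  move=> i i_lt_s; apply/(degx_lt_xsize _ (staircase_m_gt0 st s_gt0)).
  exact: (xsize_h_lt st dc cv i_lt_s).
- move=> i j /andP[ij j_le_s]; have [_ _ dvd_hj _] := inv j j_le_s.
  by move: dvd_hj; rewrite (Mpoly_split m sigma ij) => /cdvdp_mulr.
- by move=> i i_le_s; have [_ coef_h _ _] := inv i i_le_s; rewrite coef_h coef_g.
- move=> D G fact [|i] // /andP[_ i_lt_s].
  exact: lazard_factorE st dc fact coef_g i i_lt_s.
Qed.
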